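(* Let $A\in\mathbb{R}^{m\times n}$ satisfy the group restricted isometry property of order $2k$ with constant $\delta_{2k}\in(0,1)$, and let $\|\cdot\|_A$ be a norm on $\mathbb{R}^n$ that is decomposable with respect to $\mathcal{G}$. Let $f>0$ be a constant such that for every $h\in\mathbb{R}^n$, every $\Lambda_0\in\mathrm{GkS}$ and every optimal group $k$-sparse decomposition $\Lambda_1,\ldots,\Lambda_s$ of $h_{\mathcal{N}\setminus\Lambda_0}$ with respect to $\|\cdot\|_A$, $\sum_{j=2}^s\|h_{\Lambda_j}\|_2\le\frac1f\|h_{\mathcal{N}\setminus\Lambda_0}\|_A$. Let $h\in\mathbb{R}^n$, $\Lambda_0\in\mathrm{GkS}$, let $\Lambda_1,\ldots,\Lambda_s$ ($s\ge1$) be an optimal group $k$-sparse decomposition of $h_{\mathcal{N}\setminus\Lambda_0}$ with respect to $\|\cdot\|_A$, and let $\Lambda=\Lambda_0\cup\Lambda_1$. Then $$\|h_\Lambda\|_2\le\frac{\sqrt2\,\delta_{2k}}{f(1-\delta_{2k})}\|h_{\mathcal{N}\setminus\Lambda_0}\|_A+\frac{\sqrt{1+\delta_{2k}}}{1-\delta_{2k}}\|Ah\|_2 .$$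
   Context: Fix positive integers $n,k$, $\mathcal{N}=\{1,\ldots,n\}$, and a partition $\mathcal{G}=\{G_1,\ldots,G_g\}$ of $\mathcal{N}$ with $|G_i|\le k$. For $x\in\mathbb{R}^n$, $\Lambda\subseteq\mathcal{N}$: $(x_\Lambda)_i=x_i$ if $i\in\Lambda$, else $0$; $\mathrm{supp}(u)=\{i:u_i\ne0\}$; $G_S=\bigcup_{i\in S}G_i$. For an integer $t$, $\Lambda$ is group $t$-sparse if $\Lambda=G_S$ for some $S$ and $|\Lambda|\le t$; $\mathrm{GkS}$ is the collection of group $k$-sparse sets. A norm is decomposable w.r.t. $\mathcal{G}$ if $\|u+v\|=\|u\|+\|v\|$ whenever $\mathrm{supp}(u)\subseteq G_{S_u}$, $\mathrm{supp}(v)\subseteq G_{S_v}$ with $S_u\cap S_v=\emptyset$. $A$ satisfies the group restricted isometry property of order $2k$ with constant $\delta_{2k}$ if $(1-\delta_{2k})\|z\|_2^2\le\|Az\|_2^2\le(1+\delta_{2k})\|z\|_2^2$ for every $z$ whose support lies in some group $2k$-sparse set. Optimal group $k$-sparse decomposition of $v=h_{\mathcal{N}\setminus\Lambda_0}$ w.r.t. $\|\cdot\|_A$: pairwise disjoint group $k$-sparse sets $\Lambda_1,\ldots,\Lambda_s\subseteq\mathcal{N}\setminus\Lambda_0$ with union $\mathcal{N}\setminus\Lambda_0$, such that for each $i$, with $r_i=v-\sum_{j<i}v_{\Lambda_j}$, $\Lambda_i$ minimizes $\|r_i-(r_i)_\Lambda\|_A$ over group $k$-sparse $\Lambda\subseteq\mathcal{N}\setminus(\Lambda_0\cup\cdots\cup\Lambda_{i-1})$.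 *)

From HB Require Import structures.
From mathcomp Require Import all_boot all_order all_algebra.
From mathcomp Require Import reals.
Set Implicit Arguments. Unset Strict Implicit. Unset Printing Implicit Defensive.
Import Order.TTheory GRing.Theory Num.Theory.
Local Open Scope ring_scope.

Definition norm2 (R : realType) (p : nat) (x : 'cV[R]_p) : R :=
  Num.sqrt (\sum_i (x i 0) ^+ 2).

Section Defs.
Variables (R : realType) (n : nat).

Definition restrict (L : {set 'I_n}) (x : 'cV[R]_n) : 'cV[R]_n :=
  \col_i (if i \in L then x i 0 else 0).

Definition supp (u : 'cV[R]_n) : {set 'I_n} := [set i | u i 0 != 0].


Definition group_partition (P : {set {set 'I_n}}) (k : nat) : Prop :=
  partition P [set: 'I_n] /\ forall B, B \in P -> (#|B| <= k)%N.

Definition group_sparse (P : {set {set 'I_n}}) (t : nat) (L : {set 'I_n}) : Prop :=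
  (exists2 S : {set {set 'I_n}}, S \subset P & L = cover S) /\ (#|L| <= t)%N.

Definition is_norm (N : 'cV[R]_n -> R) : Prop :=
  [/\ forall x, 0 <= N x,
      forall x, N x = 0 -> x = 0,
      forall (a : R) x, N (a *: x) = `|a| * N x
    & forall x y, N (x + y) <= N x + N y].

Definition decomposable (P : {set {set 'I_n}}) (N : 'cV[R]_n -> R) : Prop :=
  forall (u v : 'cV[R]_n) (Su Sv : {set {set 'I_n}}),
    Su \subset P -> Sv \subset P -> [disjoint Su & Sv] ->
    supp u \subset cover Su -> supp v \subset cover Sv ->
    N (u + v) = N u + N v.

Definition group_RIP (m : nat) (P : {set {set 'I_n}}) (k : nat)
    (A : 'M[R]_(m, n)) (d : R) : Prop :=
  forall z : 'cV[R]_n,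
    (exists2 L, group_sparse P (2 * k) L & supp z \subset L) ->
    (1 - d) * norm2 z ^+ 2 <= norm2 (A *m z) ^+ 2 /\
    norm2 (A *m z) ^+ 2 <= (1 + d) * norm2 z ^+ 2.

(* Ls = [:: Lambda_1; ...; Lambda_s] is an optimal group k-sparse
   decomposition of v = h_{N \ Lambda_0} w.r.t. N (0-indexed list). *)
Definition optimal_decomposition (P : {set {set 'I_n}}) (k : nat)
    (N : 'cV[R]_n -> R) (h : 'cV[R]_n) (L0 : {set 'I_n})
    (Ls : seq {set 'I_n}) : Prop :=
  let v := restrict (~: L0) h in
  [/\ forall i, (i < size Ls)%N -> group_sparse P k (nth set0 Ls i),
      forall i, (i < size Ls)%N -> nth set0 Ls i \subset ~: L0,
      forall i j, (i < size Ls)%N -> (j < size Ls)%N -> i != j ->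
        [disjoint nth set0 Ls i & nth set0 Ls j],
      \bigcup_(B <- Ls) B = ~: L0
    & forall i, (i < size Ls)%N ->
        let prev := L0 :|: \bigcup_(j < i) nth set0 Ls j in
        let r := v - \sum_(j < i) restrict (nth set0 Ls j) v in
        nth set0 Ls i \subset ~: prev /\
        forall L, group_sparse P k L -> L \subset ~: prev ->
          N (r - restrict (nth set0 Ls i) r) <= N (r - restrict L r)].

End Defs.

From HB Require Import structures.
From mathcomp Require Import all_boot all_order all_algebra.
From mathcomp Require Import reals.
From mathcomp Require Import ring lra.
Set Implicit Arguments. Unset Strict Implicit. Unset Printing Implicit Defensive.
Import Order.TTheory GRing.Theory Num.Theory.
Local Open Scope ring_scope.

(* Write U = h_Λ with Λ = Λ_0 ∪ Λ_1.  Since h = U + Σ_{j≥2} h_{Λ_j}, the lower RIP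
   bound gives
     (1 - δ) |U|² ≤ |AU|² = <AU, Ah> - Σ_{j≥2} <AU, A h_{Λ_j}>.
   Cauchy–Schwarz and the upper RIP bound control the first term by √(1+δ) |U| |Ah|.
   Each cross term pairs vectors with disjoint group-sparse supports, so by restricted
   orthogonality it is at most δ (|h_{Λ_0}| + |h_{Λ_1}|) |h_{Λ_j}| ≤ √2 δ |U| |h_{Λ_j}|.
   Dividing by |U| leaves √2 δ Σ_{j≥2} |h_{Λ_j}|, which the hypothesis on f bounds by
   √2 δ / f · |h_{N∖Λ_0}|_A. *)

Section InnerProduct.
Variable R : realType.

Definition dot (p : nat) (x y : 'cV[R]_p) : R := \sum_i x i 0 * y i 0.

Lemma dotC p (x y : 'cV[R]_p) : dot x y = dot y x.
Proof. by apply: eq_bigr => i _; rewrite mulrC. Qed.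

Lemma dotDr p (x y z : 'cV[R]_p) : dot x (y + z) = dot x y + dot x z.
Proof. by rewrite /dot -big_split; apply: eq_bigr => i _; rewrite mxE mulrDr. Qed.

Lemma dotDl p (x y z : 'cV[R]_p) : dot (y + z) x = dot y x + dot z x.
Proof. by rewrite dotC dotDr !(dotC x). Qed.

Lemma dotZl p c (x y : 'cV[R]_p) : dot (c *: x) y = c * dot x y.
Proof. by rewrite /dot mulr_sumr; apply: eq_bigr => i _; rewrite mxE mulrA. Qed.

Lemma dotZr p c (x y : 'cV[R]_p) : dot x (c *: y) = c * dot x y.
Proof. by rewrite dotC dotZl dotC. Qed.

Lemma dot0r p (x : 'cV[R]_p) : dot x 0 = 0.
Proof. by rewrite /dot big1 // => i _; rewrite mxE mulr0. Qed.

Lemma dot_sumr p (x : 'cV[R]_p) I (r : seq I) (F : I -> 'cV[R]_p) :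
  dot x (\sum_(i <- r) F i) = \sum_(i <- r) dot x (F i).
Proof. exact: (big_morph (dot x) (dotDr x) (dot0r x)). Qed.

Lemma dot_scaleD_expand p c s (x y : 'cV[R]_p) :
  dot (c *: x + s *: y) (c *: x + s *: y) =
  c ^+ 2 * dot x x + 2 * c * s * dot x y + s ^+ 2 * dot y y.
Proof. by rewrite dotDl !dotDr !dotZl !dotZr (dotC y x); ring. Qed.

Lemma norm2_ge0 p (x : 'cV[R]_p) : 0 <= norm2 x.
Proof. exact: sqrtr_ge0. Qed.

Lemma norm2_sq p (x : 'cV[R]_p) : norm2 x ^+ 2 = dot x x.
Proof. by rewrite /norm2 sqr_sqrtr //; apply: sumr_ge0 => i _; rewrite sqr_ge0. Qed.

Lemma norm2_eq0 p (x : 'cV[R]_p) : norm2 x = 0 -> x = 0.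
Proof.
move=> x0; have : dot x x = 0 by rewrite -norm2_sq x0 expr0n.
move=> /psumr_eq0P x2_eq0; apply/matrixP => i j; rewrite (ord1 j) mxE.
by apply/eqP; rewrite -sqrf_eq0 expr2 x2_eq0 // => l _; rewrite -expr2 sqr_ge0.
Qed.

(* At [c = b / a] the right-hand side of the hypothesis equals [2 c K a b]. *)
Lemma le_mul_from_scaled_bound (K a b g : R) :
  0 <= a -> 0 <= b -> 0 <= K -> (a = 0 -> g = 0) -> (b = 0 -> g = 0) ->
  (forall c, 0 < c -> 2 * c * g <= K * (c ^+ 2 * a ^+ 2 + b ^+ 2)) ->
  g <= K * a * b.
Proof.
move=> a_ge0 b_ge0 K_ge0 ga gb bound.
have [a0|a_neq0] := eqVneq a 0; first by rewrite (ga a0) a0 mulr0 mul0r.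
have [b0|b_neq0] := eqVneq b 0; first by rewrite (gb b0) b0 mulr0.
have a_gt0 : 0 < a by rewrite lt_def a_neq0.
have b_gt0 : 0 < b by rewrite lt_def b_neq0.
have := bound (b / a) (divr_gt0 b_gt0 a_gt0).
have -> : K * ((b / a) ^+ 2 * a ^+ 2 + b ^+ 2) = 2 * (b / a) * (K * a * b).
  by field.
by rewrite ler_pM2l // mulr_gt0 // divr_gt0.
Qed.

Lemma dot_le_norm2 p (x y : 'cV[R]_p) : dot x y <= norm2 x * norm2 y.
Proof.
rewrite -[norm2 x]mul1r; apply: le_mul_from_scaled_bound; rewrite ?norm2_ge0 //.
- by move/norm2_eq0 => ->; rewrite dotC dot0r.
- by move/norm2_eq0 => ->; rewrite dot0r.
move=> c _; have := sqr_ge0 (norm2 (c *: x + (-1) *: y)).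
by rewrite mul1r !norm2_sq dot_scaleD_expand sqrrN expr1n; lra.
Qed.

End InnerProduct.

Section Restriction.
Variables (R : realType) (n : nat).
Implicit Types (L : {set 'I_n}) (x y : 'cV[R]_n).

Lemma restrictE L x i : restrict L x i 0 = if i \in L then x i 0 else 0.
Proof. by rewrite mxE. Qed.

Lemma supp_restrict L x : supp (restrict L x) \subset L.
Proof. by apply/subsetP => i; rewrite inE restrictE; case: ifP; rewrite ?eqxx. Qed.

Lemma supp_scale_restrictD L1 L2 x y c s :
  supp (c *: restrict L1 x + s *: restrict L2 y) \subset L1 :|: L2.
Proof.
apply/subsetP => i; rewrite !inE !mxE.
by case: (i \in L1); case: (i \in L2); rewrite ?mulr0 ?addr0 ?eqxx.
Qed.

Lemma dot_restrict_disjoint L1 L2 x y : [disjoint L1 & L2] ->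
  dot (restrict L1 x) (restrict L2 y) = 0.
Proof.
move=> dj; rewrite /dot big1 // => i _; rewrite !restrictE.
by case: ifP => [/(disjointFr dj) ->|_]; rewrite ?mulr0 ?mul0r.
Qed.

Lemma restrictU L1 L2 x : [disjoint L1 & L2] ->
  restrict (L1 :|: L2) x = restrict L1 x + restrict L2 x.
Proof.
move=> dj; apply/matrixP => i j; rewrite (ord1 j) !mxE inE.
have [i1|_] := boolP (i \in L1); first by rewrite (disjointFr dj i1) addr0.
by case: ifP; rewrite add0r.
Qed.

Lemma restrict_addC L x : x = restrict L x + restrict (~: L) x.
Proof.
by apply/matrixP => i j; rewrite (ord1 j) !mxE inE; case: ifP; rewrite ?addr0 ?add0r.
Qed.

Lemma sum_restrict_disjoint (Ls : seq {set 'I_n}) x :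
  (forall i j, (i < size Ls)%N -> (j < size Ls)%N -> i != j ->
     [disjoint nth set0 Ls i & nth set0 Ls j]) ->
  \sum_(j < size Ls) restrict (nth set0 Ls j) x = restrict (\bigcup_(B <- Ls) B) x.
Proof.
move=> dj; apply/matrixP => i c; rewrite (ord1 c) summxE restrictE bigcup_seq.
case: bigcupP => [[B BLs iB]|notin_cup].
  have jB : (index B Ls < size Ls)%N by rewrite index_mem.
  rewrite (bigD1 (Ordinal jB)) //= restrictE nth_index // iB big1 ?addr0 // => j nj.
  have := dj j _ (ltn_ord j) jB nj; rewrite nth_index // => djB.
  by rewrite restrictE (disjointFl djB iB).
rewrite big1 // => j _; rewrite restrictE; case: ifP => // ij.
by case: notin_cup; exists (nth set0 Ls j); rewrite ?mem_nth.
Qed.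

Lemma norm2_restrictU_sq L1 L2 x : [disjoint L1 & L2] ->
  norm2 (restrict (L1 :|: L2) x) ^+ 2
    = norm2 (restrict L1 x) ^+ 2 + norm2 (restrict L2 x) ^+ 2.
Proof.
move=> dj; rewrite !norm2_sq restrictU // dotDl !dotDr.
rewrite (dotC (restrict L2 x)) !(dot_restrict_disjoint _ _ dj); lra.
Qed.

Lemma norm2_restrict_add_le L1 L2 x : [disjoint L1 & L2] ->
  norm2 (restrict L1 x) + norm2 (restrict L2 x)
    <= Num.sqrt 2 * norm2 (restrict (L1 :|: L2) x).
Proof.
move=> dj; have := norm2_restrictU_sq x dj.
set a := norm2 (restrict L1 x); set b := norm2 (restrict L2 x).
set u := norm2 _ => u_sq.
have [a0 b0 u0] : [/\ 0 <= a, 0 <= b & 0 <= u] by split; apply: norm2_ge0.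
have : (a + b) ^+ 2 <= 2 * u ^+ 2 by have := sqr_ge0 (a - b); lra.
move=> /ler_wsqrtr; rewrite sqrtr_sqr sqrtrM // sqrtr_sqr !ger0_norm //.
exact: addr_ge0.
Qed.

End Restriction.

Lemma group_sparseU n (P : {set {set 'I_n}}) k L1 L2 :
  group_sparse P k L1 -> group_sparse P k L2 ->
  group_sparse P (2 * k) (L1 :|: L2).
Proof.
move=> [[S1 sS1 ->] c1] [[S2 sS2 ->] c2]; split.
  by exists (S1 :|: S2); rewrite ?subUset ?sS1 // /cover bigcup_setU.
by rewrite (leq_trans (leq_card_setU _ _).1) // mul2n -addnn leq_add.
Qed.

Section RestrictedIsometry.
Variables (R : realType) (n m k : nat) (P : {set {set 'I_n}}).
Variables (A : 'M[R]_(m, n)) (d : R).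
Hypotheses (rip : group_RIP P k A d) (d_ge0 : 0 <= d).
Implicit Types (L : {set 'I_n}) (h x y : 'cV[R]_n).

Lemma RIP_norm2_mulmx_le L x : group_sparse P (2 * k) L ->
  norm2 (A *m restrict L x) <= Num.sqrt (1 + d) * norm2 (restrict L x).
Proof.
move=> gL; have [_ upper] := rip (ex_intro2 _ _ _ gL (supp_restrict L x)).
rewrite -[norm2 (A *m _)]ger0_norm ?norm2_ge0 // -sqrtr_sqr.
rewrite -[norm2 (restrict _ _)]ger0_norm ?norm2_ge0 // -sqrtr_sqr -sqrtrM.
  exact: ler_wsqrtr.
by rewrite addr_ge0.
Qed.

(* Polarisation: [4 c <A u, A v> = |A (c u + v)|^2 - |A (c u - v)|^2], and as [u] and
   [v] are orthogonal, RIP bounds this by [2 d (c^2 |u|^2 + |v|^2)] in absolute value. *)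
Lemma RIP_dot_restrict L1 L2 x y :
  group_sparse P k L1 -> group_sparse P k L2 -> [disjoint L1 & L2] ->
  `|dot (A *m restrict L1 x) (A *m restrict L2 y)|
    <= d * norm2 (restrict L1 x) * norm2 (restrict L2 y).
Proof.
move=> g1 g2 dj; set u := restrict L1 x; set v := restrict L2 y.
apply: le_mul_from_scaled_bound; rewrite ?norm2_ge0 //.
- by move/norm2_eq0 => ->; rewrite mulmx0 dotC dot0r normr0.
- by move/norm2_eq0 => ->; rewrite mulmx0 dot0r normr0.
move=> c c_gt0.
have RIP_at s := rip (ex_intro2 _ _ _ (group_sparseU g1 g2)
                                   (supp_scale_restrictD L1 L2 x y c s)).
have [lo1 up1] := RIP_at 1; have [lo2 up2] := RIP_at (-1).
move: lo1 up1 lo2 up2.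
rewrite !norm2_sq !mulmxDr -!scalemxAr !dot_scaleD_expand -/u -/v.
rewrite (dot_restrict_disjoint x y dj) sqrrN expr1n => lo1 up1 lo2 up2.
rewrite -[2 * c]gtr0_norm ?mulr_gt0 // -normrM ler_norml.
apply/andP; split; lra.
Qed.

Lemma RIP_dot_restrictU_le L0 L1 L h :
  group_sparse P k L0 -> group_sparse P k L1 -> group_sparse P k L ->
  [disjoint L0 & L1] -> [disjoint L0 & L] -> [disjoint L1 & L] ->
  `|dot (A *m restrict (L0 :|: L1) h) (A *m restrict L h)|
    <= d * (norm2 (restrict L0 h) + norm2 (restrict L1 h)) * norm2 (restrict L h).
Proof.
move=> g0 g1 gL dj01 dj0 dj1.
rewrite restrictU // mulmxDr dotDl mulrDr mulrDl.
exact: le_trans (ler_normD _ _) (lerD (RIP_dot_restrict _ _ g0 gL dj0)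
                                      (RIP_dot_restrict _ _ g1 gL dj1)).
Qed.

Lemma RIP_head_bound h L0 Ls :
  group_sparse P k L0 ->
  (forall i, (i < size Ls)%N -> group_sparse P k (nth set0 Ls i)) ->
  (forall i j, (i < size Ls)%N -> (j < size Ls)%N -> i != j ->
     [disjoint nth set0 Ls i & nth set0 Ls j]) ->
  \bigcup_(B <- Ls) B = ~: L0 -> (0 < size Ls)%N ->
  (1 - d) * norm2 (restrict (L0 :|: nth set0 Ls 0) h)
    <= Num.sqrt (1 + d) * norm2 (A *m h)
       + Num.sqrt 2 * d * \sum_(1 <= j < size Ls) norm2 (restrict (nth set0 Ls j) h).
Proof.
move=> g0 gLs djLs cover s_gt0.
set L1 := nth set0 Ls 0; set U := restrict (L0 :|: L1) h.
set x := norm2 U; set y := norm2 (A *m h).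
set S := \sum_(1 <= j < size Ls) _.
have dj0 j : (j < size Ls)%N -> [disjoint L0 & nth set0 Ls j].
  move=> js; rewrite disjoint_sym disjoints_subset -cover bigcup_seq.
  exact: bigcup_sup (mem_nth _ js).
have g1 := gLs 0%N s_gt0; have dj01 := dj0 0%N s_gt0.
have eh : h = U + \sum_(1 <= j < size Ls) restrict (nth set0 Ls j) h.
  rewrite {1}(restrict_addC L0 h) -cover -sum_restrict_disjoint //.
  rewrite -(big_mkord xpredT (fun j => restrict (nth set0 Ls j) h)) big_ltn //.
  by rewrite addrA /U restrictU.
have expand : norm2 (A *m U) ^+ 2 = dot (A *m U) (A *m h)
    - \sum_(1 <= j < size Ls) dot (A *m U) (A *m restrict (nth set0 Ls j) h).
  by rewrite norm2_sq {1}eh mulmxDr mulmx_sumr dotDr dot_sumr addrK.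
have [lower _] := rip (ex_intro2 _ _ _ (group_sparseU g0 g1) (supp_restrict _ h)).
have head : dot (A *m U) (A *m h) <= Num.sqrt (1 + d) * x * y.
  apply: le_trans (dot_le_norm2 _ _) (ler_wpM2r (norm2_ge0 _) _).
  exact: RIP_norm2_mulmx_le (group_sparseU g0 g1).
have tail : - \sum_(1 <= j < size Ls) dot (A *m U) (A *m restrict (nth set0 Ls j) h)
    <= d * (Num.sqrt 2 * x) * S.
  rewrite -sumrN /S mulr_sumr; apply: ler_sum_nat => j /andP[j_gt0 js].
  apply: le_trans (ler_wpM2r (norm2_ge0 _) (ler_wpM2l d_ge0
                     (norm2_restrict_add_le h dj01))).
  have dj1 : [disjoint L1 & nth set0 Ls j] by apply: djLs; rewrite // eq_sym -lt0n.
  by case/ler_normlP: (RIP_dot_restrictU_le h g0 g1 (gLs j js) dj01 (dj0 j js) dj1).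
have [x_ge0 y_ge0] : 0 <= x /\ 0 <= y by split; apply: norm2_ge0.
have S_ge0 : 0 <= S by apply: sumr_ge0 => j _; apply: norm2_ge0.
have [->|x_neq0] := eqVneq x 0.
  by rewrite mulr0 addr_ge0 ?mulr_ge0 ?sqrtr_ge0.
have x_gt0 : 0 < x by rewrite lt_def x_neq0.
rewrite -(ler_pM2l x_gt0); move: lower; rewrite -/U -/x; lra.
Qed.

End RestrictedIsometry.

Unset Implicit Arguments.

Theorem lemma5p2 (R : realType) (n k m : nat) (P : {set {set 'I_n}})
    (A : 'M[R]_(m, n)) (d : R) (NA : 'cV[R]_n -> R) (f : R) :
  (0 < n)%N -> (0 < k)%N ->
  group_partition P k ->
  0 < d < 1 -> group_RIP P k A d ->
  is_norm NA -> decomposable P NA ->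
  0 < f ->
  (forall (h : 'cV[R]_n) (L0 : {set 'I_n}) (Ls : seq {set 'I_n}),
      group_sparse P k L0 -> optimal_decomposition P k NA h L0 Ls ->
      \sum_(1 <= j < size Ls) norm2 (restrict (nth set0 Ls j) h)
        <= f^-1 * NA (restrict (~: L0) h)) ->
  forall (h : 'cV[R]_n) (L0 : {set 'I_n}) (Ls : seq {set 'I_n}),
    group_sparse P k L0 -> optimal_decomposition P k NA h L0 Ls ->
    (1 <= size Ls)%N ->
    norm2 (restrict (L0 :|: nth set0 Ls 0) h)
      <= Num.sqrt 2 * d / (f * (1 - d)) * NA (restrict (~: L0) h)
         + Num.sqrt (1 + d) / (1 - d) * norm2 (A *m h).
Proof.
move=> _ _ _ /andP[d_gt0 d_lt1] rip _ _ f_gt0 tail_le h L0 Ls g0 opt size_gt0.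
have [gLs _ djLs cover _] := opt.
have := RIP_head_bound rip (ltW d_gt0) h g0 gLs djLs cover size_gt0.
have := tail_le h L0 Ls g0 opt.
set S := \sum_(1 <= j < _) _; set N := NA _; set x := norm2 _; set y := norm2 _.
move=> S_le head.
have one_sub_d_gt0 : 0 < 1 - d by rewrite subr_gt0.
have -> : Num.sqrt 2 * d / (f * (1 - d)) * N + Num.sqrt (1 + d) / (1 - d) * y
    = (Num.sqrt (1 + d) * y + Num.sqrt 2 * d * (f^-1 * N)) / (1 - d).
  by field; rewrite !gt_eqF.
rewrite ler_pdivlMr // mulrC (le_trans head) // lerD2l ler_wpM2l //.
by rewrite mulr_ge0 ?sqrtr_ge0 ?ltW.
Qed.
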